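(* Let $n\geq 2$. On $\mathfrak{sl}_{n+1}(\mathbb C)$ with commutator bracket, let $\langle X,Y\rangle=\operatorname{tr}(XY^* )$. Embed $\mathfrak{sl}_n(\mathbb C)$ as the upper-left $n\times n$ block, let $I=\sqrt{\tfrac{1}{n(n+1)}}\begin{pmatrix}\mathrm{id}_n&0\\0&-n\end{pmatrix}$ and $\mathfrak s=\operatorname{span}_{\mathbb C}\{e_{i(n+1)},e_{(n+1)i}:1\le i\le n\}$ ($e_{ij}$ the elementary matrices), so that $\mathfrak{sl}_{n+1}(\mathbb C)=\mathfrak{sl}_n(\mathbb C)\oplus\mathbb CI\oplus\mathfrak s$ orthogonally. For $x,y,z>0$ let $\sigma_{x,y,z}=x^{-1}\mathrm{id}_{\mathfrak{sl}_n(\mathbb C)}+y^{-1}\mathrm{id}_{\mathbb CI}+z^{-1}\mathrm{id}_{\mathfrak s}$ and let $P_{x,y,z}$ be the torsion-twisted Chern--Ricci operator of the Hermitian inner product $\langle\sigma_{x,y,z}\cdot,\cdot\rangle$ on $(\mathfrak{sl}_{n+1}(\mathbb C),[\cdot,\cdot])$. Then for all $x,y,z>0$, \[P_{x,y,z}=\Big(nx+\frac{z^2}{x}\Big)\mathrm{id}_{\mathfrak{sl}_n(\mathbb C)}+(n+1)\frac{z^2}{y}\mathrm{id}_{\mathbb CI}+\frac{n+1}{n}\big((n-1)x+y\big)\mathrm{id}_{\mathfrak s}.\]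
   Context: For a complex Lie algebra $(\mathfrak g,\mu)$ with Hermitian inner product $g$, the torsion-twisted Chern--Ricci operator $P^g_\mu$ is the $g$-Hermitian endomorphism defined by $g(P^g_\mu X,X)=\sum_{i<j}|g(\mu(e_i,e_j),X)|^2$ for any $g$-unitary complex basis $\{e_i\}$; equivalently $P^g_\mu=\tfrac12\sum_i\operatorname{ad}_{e_i}\circ\operatorname{ad}_{e_i}^*$ with adjoint taken w.r.t. $g$. It satisfies $g(P\cdot,\cdot)=\Theta(g)$, the torsion-twisted Chern--Ricci form of the corresponding left-invariant metric. *)

From mathcomp Require Import all_boot all_order all_algebra.
Set Implicit Arguments. Unset Strict Implicit. Unset Printing Implicit Defensive.
Import Order.TTheory GRing.Theory Num.Theory.
Local Open Scope ring_scope.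

Section SL.
Variables (C : numClosedFieldType) (n : nat).

Definition adjmx (A : 'M[C]_(n.+1)) : 'M[C]_(n.+1) := (map_mx Num.conj A)^T.

Definition hip (X Y : 'M[C]_(n.+1)) : C := \tr (X *m adjmx Y).

Definition in_sl (X : 'M[C]_(n.+1)) : Prop := \tr X = 0.

Definition lie (X Y : 'M[C]_(n.+1)) : 'M[C]_(n.+1) := X *m Y - Y *m X.

(* the matrix I = sqrt(1/(n(n+1))) diag(id_n, -n) (index ord_max is the (n+1)-th) *)
Definition Imat : 'M[C]_(n.+1) :=
  sqrtC ((n * n.+1)%:R^-1) *:
    \matrix_(i, j) (if i == j then (if i == ord_max then - n%:R else 1) else 0).

(* orthogonal projection onto s = span {e_{i,n+1}, e_{n+1,i} : i <= n} *)
Definition proj_s (X : 'M[C]_(n.+1)) : 'M[C]_(n.+1) :=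
  \matrix_(i, j) (if (i == ord_max) (+) (j == ord_max) then X i j else 0).

Definition proj_I (X : 'M[C]_(n.+1)) : 'M[C]_(n.+1) := hip X Imat *: Imat.

(* orthogonal projection (on sl_{n+1}) onto sl_n embedded as upper-left block *)
Definition proj_sln (X : 'M[C]_(n.+1)) : 'M[C]_(n.+1) := X - proj_I X - proj_s X.

Definition sigma (x y z : C) (X : 'M[C]_(n.+1)) : 'M[C]_(n.+1) :=
  x^-1 *: proj_sln X + y^-1 *: proj_I X + z^-1 *: proj_s X.

Definition gxyz (x y z : C) (X Y : 'M[C]_(n.+1)) : C := hip (sigma x y z X) Y.

Definition unitary_basis (g : 'M[C]_(n.+1) -> 'M[C]_(n.+1) -> C)
    (d : nat) (e : 'I_d -> 'M[C]_(n.+1)) : Prop :=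
  (forall i, in_sl (e i)) /\
  (forall i j, g (e i) (e j) = (i == j)%:R) /\
  (forall X, in_sl X -> exists a : 'I_d -> C, X = \sum_(i < d) a i *: e i).

Definition torsion_form (g : 'M[C]_(n.+1) -> 'M[C]_(n.+1) -> C)
    (d : nat) (e : 'I_d -> 'M[C]_(n.+1)) (X : 'M[C]_(n.+1)) : C :=
  \sum_(i < d) \sum_(j < d | (i < j)%N) `|g (lie (e i) (e j)) X| ^+ 2.

Definition is_twisted_chern_ricci (g : 'M[C]_(n.+1) -> 'M[C]_(n.+1) -> C)
    (P : 'M[C]_(n.+1) -> 'M[C]_(n.+1)) : Prop :=
  (forall X, in_sl X -> in_sl (P X)) /\
  (forall X Y, in_sl X -> in_sl Y -> P (X + Y) = P X + P Y) /\
  (forall (c : C) X, in_sl X -> P (c *: X) = c *: P X) /\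
  (forall X Y, in_sl X -> in_sl Y -> g (P X) Y = g X (P Y)) /\
  (forall d (e : 'I_d -> 'M[C]_(n.+1)), unitary_basis g e ->
     forall X, in_sl X -> g (P X) X = torsion_form g e X).

Definition Pclaim (x y z : C) (X : 'M[C]_(n.+1)) : 'M[C]_(n.+1) :=
  (n%:R * x + z ^+ 2 / x) *: proj_sln X
  + (n.+1%:R * (z ^+ 2 / y)) *: proj_I X
  + (n.+1%:R / n%:R * ((n.-1)%:R * x + y)) *: proj_s X.

End SL.

(* Write W := sigma X, tau := sigma^-1 = sigma_{1/x,1/y,1/z} (the same block
   scaling with inverted coefficients) and D := e_(n+1)(n+1).  Since sigma is
   <.,.>-self-adjoint, the g-adjoint of ad_u is tau o ad_(u^* ) o sigma, so
   g([e_i, e_j], X) = g(e_j, w_i) with w_i := tau [e_i^*, W].  Parseval in a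
   g-unitary basis turns twice the torsion form at X into sum_i g(w_i, w_i) =
   sum_i g(T e_i, e_i) for T := tau o ad_W o tau o ad_(W^* ).  As T kills the
   identity matrix, this basis sum is the ordinary trace of T on gl_(n+1),
   computed in the basis of matrix units.  With
   tau = x id + (y - x) pi_I + (z - x) pi_s, pi_I of rank one and
   pi_s Y = D Y + Y D - 2 D Y D, that trace splits into traces of the maps
   E |-> A E B (which are tr A tr B) and of rank-one maps, and adds up to
   2 tr (Lambda W W^* ) with Lambda the block scaling by
   (n x^2 + z^2, (n+1) z^2, (n+1)((n-1) x + y) z / n).  On the other hand
   g(P X, X) = <P tau W, W> = tr (Lambda W W^* ). *)

From HB Require Import structures.
From mathcomp Require Import all_boot all_order all_algebra.
From mathcomp Require Import ring.
Set Implicit Arguments. Unset Strict Implicit. Unset Printing Implicit Defensive.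
Import Order.TTheory GRing.Theory Num.Theory.
Local Open Scope ring_scope.

Lemma sum_pairs_ltn (V : nmodType) d (f : 'I_d -> 'I_d -> V) :
    (forall i j, f i j = f j i) -> (forall i, f i i = 0) ->
  \sum_(i < d) \sum_(j < d) f i j = (\sum_(i < d) \sum_(j < d | (i < j)%N) f i j) *+ 2.
Proof.
move=> f_sym f_diag.
transitivity (\sum_(i < d) \sum_(j < d)
  ((if (i < j)%N then f i j else 0) + (if (j < i)%N then f j i else 0))).
  apply: eq_bigr => i _; apply: eq_bigr => j _.
  case: ltngtP => [_|_|/val_inj->]; rewrite ?addr0 ?add0r ?f_diag ?addr0 //.
under eq_bigr do rewrite big_split /=.
rewrite big_split /= mulr2n; congr (_ + _).
  by apply: eq_bigr => i _; rewrite [RHS]big_mkcond.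
by rewrite [LHS]exchange_big; apply: eq_bigr => i _; rewrite [RHS]big_mkcond.
Qed.

Section MatrixUnits.
Variables (R : comPzRingType) (m : nat).
Implicit Types A B K : 'M[R]_m.

Lemma delta_mulmxE (a b : 'I_m) B i j :
  (delta_mx a b *m B) i j = (i == a)%:R * B b j.
Proof.
rewrite mxE (bigD1 b) //= big1 => [|k kb]; first by rewrite !mxE eqxx andbT addr0.
by rewrite !mxE (negbTE kb) andbF mul0r.
Qed.

Lemma mulmx_deltaE (a b : 'I_m) A i j :
  (A *m delta_mx a b) i j = A i a * (j == b)%:R.
Proof.
rewrite mxE (bigD1 a) //= big1 => [|k ka]; first by rewrite !mxE eqxx /= addr0.
by rewrite !mxE (negbTE ka) mulr0.
Qed.

Lemma mxtrace_mulmx_delta K (a b : 'I_m) : \tr (K *m delta_mx a b) = K b a.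
Proof.
rewrite /mxtrace (bigD1 b) //= big1 => [|k kb]; last first.
  by rewrite mulmx_deltaE (negbTE kb) mulr0.
by rewrite mulmx_deltaE eqxx mulr1 addr0.
Qed.

Lemma mxtrace_delta (a b : 'I_m) : \tr (delta_mx a b : 'M[R]_m) = (a == b)%:R.
Proof. by rewrite -[delta_mx a b]mul1mx mxtrace_mulmx_delta mxE eq_sym. Qed.

End MatrixUnits.

Section HermitianProduct.
Variables (C : numClosedFieldType) (n : nat).
Local Notation M := 'M[C]_n.+1.
Implicit Types A B X Y Z : M.

Lemma adjmxE A i j : adjmx A i j = (A j i)^*.
Proof. by rewrite !mxE. Qed.

Lemma adjmxK : involutive (@adjmx C n).
Proof. by move=> A; apply/matrixP => i j; rewrite !adjmxE conjCK. Qed.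

Lemma adjmxM A B : adjmx (A *m B) = adjmx B *m adjmx A.
Proof. by rewrite /adjmx map_mxM trmx_mul. Qed.

Lemma adjmxD A B : adjmx (A + B) = adjmx A + adjmx B.
Proof. by apply/matrixP => i j; rewrite !(mxE, adjmxE) rmorphD. Qed.

Lemma adjmxZ k A : adjmx (k *: A) = k^* *: adjmx A.
Proof. by apply/matrixP => i j; rewrite !(mxE, adjmxE) rmorphM. Qed.

Lemma adjmxN A : adjmx (- A) = - adjmx A.
Proof. by rewrite -scaleN1r adjmxZ rmorphN1 scaleN1r. Qed.

Lemma adjmxB A B : adjmx (A - B) = adjmx A - adjmx B.
Proof. by rewrite adjmxD adjmxN. Qed.

Lemma adjmx1 : adjmx (1%:M : M) = 1%:M.
Proof. by apply/matrixP => i j; rewrite adjmxE !mxE rmorph_nat eq_sym. Qed.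

Lemma adjmx_delta (a b : 'I_n.+1) : adjmx (delta_mx a b : M) = delta_mx b a.
Proof. by apply/matrixP => i j; rewrite adjmxE !mxE rmorph_nat andbC. Qed.

Lemma mxtrace_adjmx A : \tr (adjmx A) = (\tr A)^*.
Proof. by rewrite rmorph_sum; apply: eq_bigr => i _; rewrite adjmxE. Qed.

Lemma hipE A B : hip A B = \sum_i \sum_j A i j * (B i j)^*.
Proof.
by apply: eq_bigr => i _; rewrite mxE; apply: eq_bigr => j _; rewrite adjmxE.
Qed.

Lemma hipC A B : (hip A B)^* = hip B A.
Proof.
rewrite !hipE rmorph_sum; apply: eq_bigr => i _; rewrite rmorph_sum.
by apply: eq_bigr => j _; rewrite rmorphM /= conjCK mulrC.
Qed.

Lemma hipDl A B Z : hip (A + B) Z = hip A Z + hip B Z.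
Proof. by rewrite /hip mulmxDl mxtraceD. Qed.

Lemma hipZl k A Z : hip (k *: A) Z = k * hip A Z.
Proof. by rewrite /hip -scalemxAl mxtraceZ. Qed.

Lemma hipNl A Z : hip (- A) Z = - hip A Z.
Proof. by rewrite -scaleN1r hipZl mulN1r. Qed.

Lemma hipBl A B Z : hip (A - B) Z = hip A Z - hip B Z.
Proof. by rewrite hipDl hipNl. Qed.

Lemma hip0l Z : hip 0 Z = 0.
Proof. by rewrite -(scale0r 0) hipZl mul0r. Qed.

Lemma hip_suml I r (P : pred I) (F : I -> M) Z :
  hip (\sum_(i <- r | P i) F i) Z = \sum_(i <- r | P i) hip (F i) Z.
Proof.
by apply: (big_morph (fun A => hip A Z)) => [A B|]; rewrite ?hipDl ?hip0l.
Qed.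

Lemma hipDr A B Z : hip Z (A + B) = hip Z A + hip Z B.
Proof. by rewrite -[LHS]hipC hipDl rmorphD /= !hipC. Qed.

Lemma hipZr k A Z : hip Z (k *: A) = k^* * hip Z A.
Proof. by rewrite -[LHS]hipC hipZl rmorphM /= !hipC. Qed.

Lemma hipNr A Z : hip Z (- A) = - hip Z A.
Proof. by rewrite -[LHS]hipC hipNl rmorphN /= hipC. Qed.

Lemma hipBr A B Z : hip Z (A - B) = hip Z A - hip Z B.
Proof. by rewrite hipDr hipNr. Qed.

Lemma hip0r Z : hip Z 0 = 0.
Proof. by rewrite -[LHS]hipC hip0l conjC0. Qed.

Lemma hip_mulmxl A B Z : hip (A *m B) Z = hip B (adjmx A *m Z).
Proof. by rewrite /hip adjmxM adjmxK -mulmxA mxtrace_mulC !mulmxA. Qed.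

Lemma hip_mulmxr A B Z : hip (A *m B) Z = hip A (Z *m adjmx B).
Proof. by rewrite /hip adjmxM adjmxK mulmxA. Qed.

Lemma hip_adjmx A B : hip (adjmx A) B = hip (adjmx B) A.
Proof. by rewrite /hip mxtrace_mulC. Qed.

Lemma hip_delta (a b : 'I_n.+1) B : hip (delta_mx a b) B = (B a b)^*.
Proof. by rewrite /hip mxtrace_mulC mxtrace_mulmx_delta adjmxE. Qed.

Lemma hip1l B : hip 1%:M B = (\tr B)^*.
Proof. by rewrite /hip mul1mx mxtrace_adjmx. Qed.

Lemma adjmx_lie A B : adjmx (lie A B) = lie (adjmx B) (adjmx A).
Proof. by rewrite /lie adjmxB !adjmxM. Qed.

Lemma lie_anti A B : lie B A = - lie A B.
Proof. by rewrite /lie opprB. Qed.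

Lemma mxtrace_lie A B : \tr (lie A B) = 0.
Proof. by rewrite /lie linearB /= mxtrace_mulC subrr. Qed.

Lemma mxtrace_lie_mulmx A B K : \tr (lie A B *m K) = \tr (B *m lie K A).
Proof.
rewrite /lie mulmxBl mulmxBr !raddfB /= -!mulmxA; congr (_ - _).
by rewrite mxtrace_mulC -mulmxA.
Qed.

Lemma hip_liel A B Z : hip (lie A B) Z = hip B (lie (adjmx A) Z).
Proof. by rewrite /lie hipBl hip_mulmxl hip_mulmxr hipBr. Qed.

Lemma hip_lier A B Z : hip (lie A B) Z = hip A (lie Z (adjmx B)).
Proof. by rewrite /lie hipBl hip_mulmxr hip_mulmxl hipBr. Qed.

Fact lie_is_linear A : linear (lie A).
Proof.
move=> k B1 B2; rewrite /lie mulmxDr mulmxDl -scalemxAr -scalemxAl.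
by rewrite scalerBr addrACA opprD.
Qed.

HB.instance Definition _ A :=
  GRing.isLinear.Build C M M *:%R (lie A) (lie_is_linear A).

End HermitianProduct.

Section Projections.
Variables (C : numClosedFieldType) (n : nat).
Local Notation N := n.+1.
Local Notation M := 'M[C]_N.
Local Notation mx := (@ord_max n).
Implicit Types A B X Y Z : M.

Definition Dmx : M := delta_mx mx mx.
Definition Jmx : M := 1%:M - N%:R *: Dmx.

Lemma Dmx_idem : Dmx *m Dmx = Dmx.
Proof. by rewrite mul_delta_mx. Qed.

Lemma mxtrace_Dmx : \tr Dmx = 1.
Proof. by rewrite mxtrace_delta eqxx. Qed.

Lemma mxtrace_mul_Dmx Y : \tr (Y *m Dmx) = Y mx mx.
Proof. exact: mxtrace_mulmx_delta. Qed.

Lemma mxtrace_Dmx_mul Y : \tr (Dmx *m Y) = Y mx mx.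
Proof. by rewrite mxtrace_mulC mxtrace_mul_Dmx. Qed.

Lemma Dmx_mul_Dmx Y : Dmx *m Y *m Dmx = Y mx mx *: Dmx.
Proof.
apply/matrixP => i j; rewrite mulmx_deltaE delta_mulmxE !mxE.
by case: (i == mx); case: (j == mx); rewrite ?mulr1 ?mulr0 ?mul1r ?mul0r.
Qed.

Lemma adjmx_Dmx : adjmx Dmx = Dmx.
Proof. exact: adjmx_delta. Qed.

Lemma adjmx_Jmx : adjmx Jmx = Jmx.
Proof. by rewrite adjmxB adjmx1 adjmxZ conjC_nat adjmx_Dmx. Qed.

Lemma JmxE i j : Jmx i j = (i == j)%:R - N%:R * ((i == mx) && (j == mx))%:R.
Proof. by rewrite !mxE. Qed.

Lemma mxtrace_Jmx : \tr Jmx = 0.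
Proof. by rewrite linearB /= mxtraceZ mxtrace_Dmx mxtrace1 mulr1 subrr. Qed.

Lemma mxtrace_Jmx2 : \tr (Jmx *m Jmx) = (n * N)%:R.
Proof.
rewrite mulmxBl !mulmxBr !mul1mx !mulmx1 -!scalemxAl -!scalemxAr Dmx_idem.
rewrite !linearB /= !mxtraceZ mxtrace_Dmx mxtrace1 natrM -natr1; ring.
Qed.

Lemma Imat_Jmx : Imat C n = sqrtC ((n * N)%:R^-1) *: Jmx.
Proof.
congr (_ *: _); apply/matrixP => i j; rewrite JmxE !mxE.
have [<-|ij] := eqVneq i j.
  by case: (i == mx); rewrite ?mulr1 ?mulr0 ?subr0 // -natr1 opprD addrC subrK.
have -> : (i == mx) && (j == mx) = false.
  by apply/negbTE; apply: contra ij => /andP[/eqP-> /eqP->].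
by rewrite mulr0 subr0 ?(negbTE ij).
Qed.

Lemma proj_IE Y : proj_I Y = ((n * N)%:R^-1 * \tr (Y *m Jmx)) *: Jmx.
Proof.
have s_real : (sqrtC ((n * N)%:R^-1))^* = sqrtC ((n * N)%:R^-1 : C).
  by apply/conj_Creal/sqrtC_real; rewrite invr_ge0 ler0n.
rewrite /proj_I Imat_Jmx hipZr s_real /hip adjmx_Jmx scalerA mulrC mulrA.
by rewrite -expr2 sqrtCK.
Qed.

Lemma proj_sE Y : proj_s Y = Dmx *m Y + Y *m Dmx - 2%:R *: (Dmx *m Y *m Dmx).
Proof.
apply/matrixP => i j; rewrite Dmx_mul_Dmx !(mulmx_deltaE, delta_mulmxE, mxE).
have [->|ni] := eqVneq i mx; have [->|nj] := eqVneq j mx;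
  rewrite ?eqxx ?(negbTE ni) ?(negbTE nj) /= ?mulr1 ?mulr0 ?mul1r ?mul0r
    ?addr0 ?add0r ?subr0 ?oppr0 //; ring.
Qed.

Fact proj_s_is_linear : linear (@proj_s C n).
Proof.
by move=> k A B; apply/matrixP => i j; rewrite !mxE; case: ifP; rewrite ?mulr0 ?addr0.
Qed.

HB.instance Definition _ :=
  GRing.isLinear.Build C M M *:%R (@proj_s C n) proj_s_is_linear.

Fact proj_I_is_linear : linear (@proj_I C n).
Proof.
move=> k A B; rewrite !proj_IE mulmxDl mxtraceD -scalemxAl mxtraceZ.
by rewrite scalerA -scalerDl mulrDr mulrCA.
Qed.

HB.instance Definition _ :=
  GRing.isLinear.Build C M M *:%R (@proj_I C n) proj_I_is_linear.

Lemma mxtrace_proj_s Y : \tr (proj_s Y) = 0.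
Proof. by apply: big1 => i _; rewrite !mxE addbb. Qed.

Lemma mxtrace_proj_I Y : \tr (proj_I Y) = 0.
Proof. by rewrite proj_IE mxtraceZ mxtrace_Jmx mulr0. Qed.

Lemma proj_s_Jmx : proj_s Jmx = 0.
Proof.
apply/matrixP => i j; rewrite [LHS]mxE [RHS]mxE JmxE; case: ifP => // h.
have ij : i != j by apply: contraTneq h => ->; rewrite addbb.
have -> : (i == mx) && (j == mx) = false.
  by apply/negbTE; apply: contra ij => /andP[/eqP-> /eqP->].
by rewrite mulr0 subr0 ?(negbTE ij).
Qed.

Lemma proj_s_proj_I Y : proj_s (proj_I Y) = 0.
Proof. by rewrite proj_IE linearZ /= proj_s_Jmx scaler0. Qed.

Lemma lie_Jmx Y : lie Y Jmx = N%:R *: (Dmx *m Y - Y *m Dmx).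
Proof.
rewrite /lie mulmxBr mulmxBl mulmx1 mul1mx -scalemxAr -scalemxAl.
move: (Y *m Dmx) (Dmx *m Y) => A B.
by apply/matrixP => i j; rewrite !mxE; ring.
Qed.

Lemma proj_s_lie_Jmx Y : proj_s (lie Y Jmx) = lie Y Jmx.
Proof.
rewrite lie_Jmx linearZ /=; congr (_ *: _); apply/matrixP => i j.
rewrite !(mulmx_deltaE, delta_mulmxE, mxE).
have [->|ni] := eqVneq i mx; have [->|nj] := eqVneq j mx;
  by rewrite ?eqxx ?(negbTE ni) ?(negbTE nj) /= ?mulr1 ?mul1r ?mulr0 ?mul0r
    ?subrr ?subr0 ?sub0r.
Qed.

Lemma hip_proj_s A B : hip (proj_s A) B = hip A (proj_s B).
Proof.
rewrite !hipE; apply: eq_bigr => i _; apply: eq_bigr => j _; rewrite !mxE.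
by case: ifP; rewrite ?rmorph0 ?mulr0 ?mul0r.
Qed.

Lemma hip_proj_I A B : hip (proj_I A) B = hip A (proj_I B).
Proof. by rewrite /proj_I hipZl hipZr hipC mulrC. Qed.

Lemma proj_I_proj_s Y : proj_I (proj_s Y) = 0.
Proof.
rewrite proj_IE; have -> : \tr (proj_s Y *m Jmx) = hip (proj_s Y) Jmx.
  by rewrite /hip adjmx_Jmx.
by rewrite hip_proj_s proj_s_Jmx hip0r mulr0 scale0r.
Qed.

Lemma proj_s_idem Y : proj_s (proj_s Y) = proj_s Y.
Proof. by apply/matrixP => i j; rewrite !mxE; case: (_ (+) _). Qed.

Lemma proj_I_idem Y : (0 < n)%N -> proj_I (proj_I Y) = proj_I Y.
Proof.
move=> n_gt0; rewrite [proj_I Y]proj_IE linearZ /= proj_IE mxtrace_Jmx2.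
by rewrite mulVf ?scale1r // pnatr_eq0 muln_eq0 negb_or -lt0n n_gt0.
Qed.

Lemma adjmx_proj_s A : adjmx (proj_s A) = proj_s (adjmx A).
Proof.
by apply/matrixP => i j; rewrite !(adjmxE, mxE) addbC; case: ifP; rewrite ?rmorph0.
Qed.

Lemma adjmx_proj_I A : adjmx (proj_I A) = proj_I (adjmx A).
Proof.
rewrite !proj_IE adjmxZ adjmx_Jmx rmorphM /= fmorphV /= conjC_nat.
by rewrite -mxtrace_adjmx adjmxM adjmx_Jmx mxtrace_mulC.
Qed.

End Projections.

Arguments Dmx {C n}.
Arguments Jmx {C n}.

Lemma linear_comb3 (R : pzRingType) (U V : lmodType R) (f : {linear U -> V})
    (a b c : R) (u v w : U) :
  f (a *: u + b *: v + c *: w) = a *: f u + b *: f v + c *: f w.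
Proof. by rewrite !linearD !linearZZ. Qed.

Section BlockScale.
Variables (C : numClosedFieldType) (n : nat).
Local Notation N := n.+1.
Local Notation M := 'M[C]_N.
Implicit Types (a b c : C) (A B X Y : M).

Definition blockscale a b c Y : M :=
  a *: proj_sln Y + b *: proj_I Y + c *: proj_s Y.

Lemma PclaimE x y z Y : Pclaim x y z Y =
  blockscale (n%:R * x + z ^+ 2 / x) (N%:R * (z ^+ 2 / y))
             (N%:R / n%:R * ((n.-1)%:R * x + y)) Y.
Proof. by []. Qed.

Lemma blockscale_sum a b c Y :
  blockscale a b c Y = a *: Y + (b - a) *: proj_I Y + (c - a) *: proj_s Y.
Proof.
rewrite /blockscale /proj_sln; move: (proj_I Y) (proj_s Y) => iY sY.
by apply/matrixP => i j; rewrite !mxE; ring.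
Qed.

Fact blockscale_is_linear a b c : linear (blockscale a b c).
Proof.
move=> k A B; rewrite !blockscale_sum !linearP /=.
move: (proj_s A) (proj_s B) (proj_I A) (proj_I B) => sA sB iA iB.
by apply/matrixP => i j; rewrite !mxE; ring.
Qed.

HB.instance Definition _ a b c :=
  GRing.isLinear.Build C M M *:%R (blockscale a b c) (blockscale_is_linear a b c).

Lemma blockscale1 Y : blockscale 1 1 1 Y = Y.
Proof. by rewrite blockscale_sum !subrr !scale0r !addr0 scale1r. Qed.

Lemma mxtrace_blockscale a b c A : \tr (blockscale a b c A) = a * \tr A.
Proof.
rewrite blockscale_sum !mxtraceD mxtraceZ [\tr (_ *: proj_I _)]mxtraceZ.
by rewrite [\tr (_ *: proj_s _)]mxtraceZ mxtrace_proj_I mxtrace_proj_s !mulr0 !addr0.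
Qed.

Lemma proj_s_blockscale a b c Y : proj_s (blockscale a b c Y) = c *: proj_s Y.
Proof.
rewrite blockscale_sum (linear_comb3 (@proj_s C n)) /= proj_s_proj_I proj_s_idem.
by rewrite scaler0 addr0 -scalerDl addrC subrK.
Qed.

Lemma proj_I_blockscale a b c Y : (0 < n)%N ->
  proj_I (blockscale a b c Y) = b *: proj_I Y.
Proof.
move=> n_gt0; rewrite blockscale_sum (linear_comb3 (@proj_I C n)) /= proj_I_idem //.
by rewrite proj_I_proj_s scaler0 addr0 -scalerDl addrC subrK.
Qed.

Lemma blockscale_lie_Jmx a b c Y : blockscale a b c (lie Y Jmx) = c *: lie Y Jmx.
Proof.
rewrite blockscale_sum -[in proj_I _]proj_s_lie_Jmx proj_I_proj_s proj_s_lie_Jmx.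
by rewrite scaler0 addr0 -scalerDl addrC subrK.
Qed.

Lemma blockscale_comp a b c a' b' c' Y : (0 < n)%N ->
  blockscale a b c (blockscale a' b' c' Y) = blockscale (a * a') (b * b') (c * c') Y.
Proof.
move=> n_gt0; rewrite [LHS]blockscale_sum proj_I_blockscale // proj_s_blockscale.
rewrite !blockscale_sum; move: (proj_I Y) (proj_s Y) => iY sY.
by apply/matrixP => i j; rewrite !mxE; ring.
Qed.

Section RealCoefficients.
Variables (a b c : C).
Hypotheses (a_real : a^* = a) (b_real : b^* = b) (c_real : c^* = c).

Lemma hip_blockscale A B : hip (blockscale a b c A) B = hip A (blockscale a b c B).
Proof.
have := hip_proj_I A B; have := hip_proj_s A B; rewrite !blockscale_sum.
move: (proj_I A) (proj_I B) (proj_s A) (proj_s B) => iA iB sA sB hs hI.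
by rewrite !(hipDl, hipZl, hipDr, hipZr) !rmorphB /= a_real b_real c_real hI hs.
Qed.

Lemma adjmx_blockscale A : adjmx (blockscale a b c A) = blockscale a b c (adjmx A).
Proof.
have := adjmx_proj_I A; have := adjmx_proj_s A; rewrite !blockscale_sum.
move: (proj_I A) (proj_I (adjmx A)) (proj_s A) (proj_s (adjmx A)).
move=> iA iA' sA sA' hs hI.
by rewrite !(adjmxD, adjmxZ) !rmorphB /= a_real b_real c_real hI hs.
Qed.

End RealCoefficients.

Lemma blockscaleE a b c Y : blockscale a b c Y = a *: Y
  + ((b - a) * ((n * N)%:R^-1 * \tr (Y *m Jmx))) *: Jmx
  + (c - a) *: (Dmx *m Y + Y *m Dmx - 2%:R *: (Dmx *m Y *m Dmx)).
Proof. by rewrite blockscale_sum proj_IE proj_sE scalerA. Qed.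

End BlockScale.

Section LinearMapTrace.
Variables (R : comPzRingType) (m : nat).
Local Notation M := 'M[R]_m.
Implicit Types (A B K : M) (F G : M -> M).

Definition lintrace F : R := \sum_a \sum_b F (delta_mx a b) a b.

Lemma eq_lintrace F G : F =1 G -> lintrace F = lintrace G.
Proof.
by move=> eqFG; apply: eq_bigr => a _; apply: eq_bigr => b _; rewrite eqFG.
Qed.

Lemma lintraceD F G : lintrace (fun E => F E + G E) = lintrace F + lintrace G.
Proof.
rewrite -big_split; apply: eq_bigr => a _; rewrite -big_split.
by apply: eq_bigr => b _; rewrite mxE.
Qed.

Lemma lintraceZ k F : lintrace (fun E => k *: F E) = k * lintrace F.
Proof.
rewrite mulr_sumr; apply: eq_bigr => a _; rewrite mulr_sumr.
by apply: eq_bigr => b _; rewrite mxE.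
Qed.

Lemma lintraceN F : lintrace (fun E => - F E) = - lintrace F.
Proof. by rewrite -mulN1r -lintraceZ; apply: eq_lintrace => E; rewrite scaleN1r. Qed.

Lemma lintrace_mulmx A B : lintrace (fun E => A *m E *m B) = \tr A * \tr B.
Proof.
rewrite /lintrace /mxtrace big_distrl; apply: eq_bigr => a _ /=.
rewrite big_distrr; apply: eq_bigr => b _ /=.
rewrite mxE (bigD1 b) //= big1 => [|k /negbTE kb]; last first.
  by rewrite mulmx_deltaE kb mulr0 mul0r.
by rewrite mulmx_deltaE eqxx mulr1 addr0.
Qed.

Lemma lintrace_rank1 (G : {linear M -> M}) K A :
  lintrace (fun E => \tr (G E *m K) *: A) = \tr (G A *m K).
Proof.
rewrite [in RHS](matrix_sum_delta A) !linear_sum mulmx_suml linear_sum.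
apply: eq_bigr => a _; rewrite linear_sum mulmx_suml linear_sum.
by apply: eq_bigr => b _; rewrite mxE linearZ /= -scalemxAl mxtraceZ mulrC.
Qed.

End LinearMapTrace.

Section DmxSimplification.
Variables (C : numClosedFieldType) (n : nat).
Local Notation M := 'M[C]_n.+1.
Local Notation mx := (@ord_max n).
Implicit Types X Y Z : M.

Lemma mulmx_Dmx2 X : X *m Dmx *m Dmx = X *m Dmx.
Proof. by rewrite -mulmxA Dmx_idem. Qed.

Lemma mulmx_Dmx_mulmx_Dmx X Y : X *m Dmx *m Y *m Dmx = Y mx mx *: (X *m Dmx).
Proof. by rewrite -!mulmxA (mulmxA Dmx) Dmx_mul_Dmx -scalemxAr. Qed.

Lemma Dmx_mulmx2_Dmx Y Z : Dmx *m Y *m Z *m Dmx = (Y *m Z) mx mx *: Dmx.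
Proof. by rewrite -(mulmxA Dmx) Dmx_mul_Dmx. Qed.

Lemma mulmx_Dmx_mulmx2_Dmx X Y Z :
  X *m Dmx *m Y *m Z *m Dmx = (Y *m Z) mx mx *: (X *m Dmx).
Proof. by rewrite -(mulmxA _ Y) mulmx_Dmx_mulmx_Dmx. Qed.

Lemma mxtrace_Dmx_mulmx2 Y Z : \tr (Dmx *m Y *m Z) = (Y *m Z) mx mx.
Proof. by rewrite -mulmxA mxtrace_Dmx_mul. Qed.

Lemma mxtrace_mulmx_Dmx_mulmx X Y : \tr (X *m Dmx *m Y) = (Y *m X) mx mx.
Proof. by rewrite mxtrace_mulC mulmxA mxtrace_mul_Dmx. Qed.

End DmxSimplification.

Ltac mxexpand := repeat progress
  rewrite ?(mulmxDl, mulmxDr, mulmxBl, mulmxBr, mulNmx, mulmxN, mul1mx, mulmx1,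
    scalerDr, scalerBr, scalerN, scalerA, mulmxA) -?scalemxAl -?scalemxAr.

Ltac mxsimpl := repeat progress (mxexpand;
  rewrite ?(Dmx_idem, mulmx_Dmx2, mulmx_Dmx_mulmx2_Dmx, Dmx_mulmx2_Dmx,
    mulmx_Dmx_mulmx_Dmx, Dmx_mul_Dmx));
  repeat progress rewrite ?mxtraceD ?raddfN /= ?mxtraceZ;
  rewrite ?(mxtrace_Dmx_mulmx2, mxtrace_mulmx_Dmx_mulmx, mxtrace_mul_Dmx,
    mxtrace_Dmx_mul, mxtrace_Dmx, mxtrace1).

Section TraceComputation.
Variables (C : numClosedFieldType) (n : nat) (x y z : C).
Local Notation N := n.+1.
Local Notation M := 'M[C]_N.
Local Notation mx := (@ord_max n).
Local Notation tau := (blockscale x y z).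
Implicit Types A B E K : M.

(* By blockscaleE, the proj_I part of tau Y is kI * tr (Y J) * J. *)
Let kI : C := (y - x) * (n * N)%:R^-1.

Variables W V : M.

Lemma tau_lie_sandwich A B E : A *m tau (lie V E) *m B =
    x *: (A *m V *m E *m B) - x *: (A *m E *m (V *m B))
  + kI *: (\tr (E *m lie Jmx V) *: (A *m Jmx *m B))
  + (z - x) *: (A *m Dmx *m V *m E *m B) + (z - x) *: (A *m V *m E *m (Dmx *m B))
  - (2%:R * (z - x)) *: (A *m Dmx *m V *m E *m (Dmx *m B))
  - (z - x) *: (A *m Dmx *m E *m (V *m B)) - (z - x) *: (A *m E *m (V *m Dmx *m B))
  + (2%:R * (z - x)) *: (A *m Dmx *m E *m (V *m Dmx *m B)).
Proof.
rewrite blockscaleE mxtrace_lie_mulmx /lie /kI; move: (\tr (E *m _)) => t.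
by mxexpand; apply/matrixP => i j; rewrite !mxE; ring.
Qed.

Definition sandwich_trace A B :=
    x * (\tr (A *m V) * \tr B - \tr A * \tr (V *m B))
  + kI * \tr (A *m Jmx *m B *m lie Jmx V)
  + (z - x) * (\tr (A *m Dmx *m V) * \tr B + \tr (A *m V) * \tr (Dmx *m B)
      - 2%:R * (\tr (A *m Dmx *m V) * \tr (Dmx *m B))
      - \tr (A *m Dmx) * \tr (V *m B) - \tr A * \tr (V *m Dmx *m B)
      + 2%:R * (\tr (A *m Dmx) * \tr (V *m Dmx *m B))).

Lemma lintrace_sandwich A B :
  lintrace (fun E => A *m tau (lie V E) *m B) = sandwich_trace A B.
Proof.
rewrite (eq_lintrace (tau_lie_sandwich A B)) !(lintraceD, lintraceN, lintraceZ).
by rewrite (lintrace_rank1 idfun) !lintrace_mulmx /sandwich_trace; ring.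
Qed.

Hypotheses (trW : \tr W = 0) (trV : \tr V = 0).
Local Notation tWV := (\tr (W *m V)).
Local Notation eWV := ((W *m V) mx mx).
Local Notation eVW := ((V *m W) mx mx).
Local Notation eWeV := (W mx mx * V mx mx).

Ltac eval_sandwich_trace := rewrite /sandwich_trace /lie /Jmx; mxsimpl;
  rewrite ?[\tr (V *m W)]mxtrace_mulC ?trW ?trV -?natr1; ring.

Lemma sandwich_trace_W_1 : sandwich_trace W 1%:M =
  x * N%:R * tWV + kI * N%:R * (n%:R * eVW + eWV - N%:R * eWeV)
  + (z - x) * (N%:R * eVW + tWV - 2%:R * eVW + 2%:R * eWeV).
Proof. eval_sandwich_trace. Qed.

Lemma sandwich_trace_1_W : sandwich_trace 1%:M W =
  - x * N%:R * tWV - kI * N%:R * (eVW - N%:R * eWeV - eWV + N%:R * eWV)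
  + (z - x) * (- 2%:R * eWeV - tWV - N%:R * eWV + 2%:R * eWV).
Proof. eval_sandwich_trace. Qed.

Lemma sandwich_trace_DW_1 : sandwich_trace (Dmx *m W) 1%:M =
  x * N%:R * eWV - kI * N%:R * (eWeV - eWV) + (z - x) * (N%:R * eWeV + eWV - eWeV).
Proof. eval_sandwich_trace. Qed.

Lemma sandwich_trace_D_W : sandwich_trace Dmx W =
  - x * tWV + kI * n%:R * N%:R * (eWeV - eWV) + (z - x) * (- eWeV - tWV + eWV).
Proof. eval_sandwich_trace. Qed.

Lemma sandwich_trace_W_D : sandwich_trace W Dmx =
  x * tWV + kI * n%:R * N%:R * (eVW - eWeV) + (z - x) * (tWV - eVW + eWeV).
Proof. eval_sandwich_trace. Qed.

Lemma sandwich_trace_1_WD : sandwich_trace 1%:M (W *m Dmx) =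
  - x * N%:R * eVW - kI * N%:R * (eVW - eWeV) + (z - x) * (eWeV - eVW - N%:R * eWeV).
Proof. eval_sandwich_trace. Qed.

Lemma sandwich_trace_DW_D : sandwich_trace (Dmx *m W) Dmx = z * (eWV - eWeV).
Proof. eval_sandwich_trace. Qed.

Lemma sandwich_trace_D_WD : sandwich_trace Dmx (W *m Dmx) = z * (eWeV - eVW).
Proof. eval_sandwich_trace. Qed.

Lemma mxtrace_tau_lie_Jmx :
  \tr (lie W (tau (lie V Jmx)) *m Jmx) = N%:R * N%:R * z * (eWV + eVW - 2%:R * eWeV).
Proof.
rewrite mxtrace_lie_mulmx blockscale_lie_Jmx (lie_anti W) !lie_Jmx; mxsimpl.
by rewrite ?[\tr (V *m W)]mxtrace_mulC ?trW ?trV -?natr1; ring.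
Qed.

(* Each term below is K |-> A K B for one of the eight pairs (A, B) evaluated
   above, except for a single rank-one map. *)
Lemma tau_lie_expand K : tau (lie W K) =
    x *: (W *m K *m 1%:M) - x *: (1%:M *m K *m W)
  + kI *: (\tr (lie W K *m Jmx) *: Jmx)
  + (z - x) *: (Dmx *m W *m K *m 1%:M) - (z - x) *: (Dmx *m K *m W)
  + (z - x) *: (W *m K *m Dmx) - (z - x) *: (1%:M *m K *m (W *m Dmx))
  - (2%:R * (z - x)) *: (Dmx *m W *m K *m Dmx)
  + (2%:R * (z - x)) *: (Dmx *m K *m (W *m Dmx)).
Proof.
rewrite blockscaleE /kI; move: (\tr (lie W K *m Jmx)) => t; rewrite /lie.
by mxexpand; apply/matrixP => i j; rewrite !mxE; ring.
Qed.

Lemma lintrace_tau_lie2 : (0 < n)%N ->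
  lintrace (fun E => tau (lie W (tau (lie V E)))) =
    \tr (blockscale (n%:R * x ^+ 2 + z ^+ 2) (N%:R * z ^+ 2)
      (N%:R / n%:R * ((n%:R - 1) * x + y) * z) W *m V) *+ 2.
Proof.
move=> n_gt0.
rewrite (eq_lintrace (fun E => tau_lie_expand (tau (lie V E)))).
rewrite !(lintraceD, lintraceN, lintraceZ) !lintrace_sandwich.
rewrite (lintrace_rank1 (lie W \o (tau \o lie V))) /= mxtrace_tau_lie_Jmx.
rewrite sandwich_trace_W_1 sandwich_trace_1_W sandwich_trace_DW_1 sandwich_trace_D_W.
rewrite sandwich_trace_W_D sandwich_trace_1_WD sandwich_trace_DW_D sandwich_trace_D_WD.
rewrite blockscaleE /Jmx; mxsimpl.
rewrite ?[\tr (V *m W)]mxtrace_mulC ?trW ?trV /kI natrM -natr1.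
have n_neq0 : n%:R != 0 :> C by rewrite pnatr_eq0 -lt0n.
have n1_neq0 : n%:R + 1 != 0 :> C by rewrite natr1 pnatr_eq0.
by field; rewrite n_neq0 n1_neq0.
Qed.

End TraceComputation.

Section TwistedMetric.
Variables (C : numClosedFieldType) (n : nat) (x y z : C).
Hypotheses (n_gt0 : (0 < n)%N) (x_gt0 : 0 < x) (y_gt0 : 0 < y) (z_gt0 : 0 < z).
Local Notation M := 'M[C]_n.+1.
Local Notation g := (@gxyz C n x y z).
Local Notation sig := (blockscale x^-1 y^-1 z^-1).
Local Notation tau := (blockscale x y z).
Implicit Types A B E W X Y : M.

Let conj_gt0 (r : C) : 0 < r -> r^* = r.
Proof. by move/gtr0_real/conj_Creal. Qed.

Let x_real := conj_gt0 x_gt0.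
Let y_real := conj_gt0 y_gt0.
Let z_real := conj_gt0 z_gt0.
Let xV_real : x^-1^* = x^-1. Proof. by rewrite conj_gt0 ?invr_gt0. Qed.
Let yV_real : y^-1^* = y^-1. Proof. by rewrite conj_gt0 ?invr_gt0. Qed.
Let zV_real : z^-1^* = z^-1. Proof. by rewrite conj_gt0 ?invr_gt0. Qed.

Lemma gxyzE A B : g A B = hip (sig A) B.
Proof. by []. Qed.

Lemma sigma_tau Y : sig (tau Y) = Y.
Proof. by rewrite blockscale_comp // !mulVf ?lt0r_neq0 // blockscale1. Qed.

Lemma tau_sigma Y : tau (sig Y) = Y.
Proof. by rewrite blockscale_comp // !mulfV ?lt0r_neq0 // blockscale1. Qed.

Lemma hip_sigma A B : hip (sig A) B = hip A (sig B).
Proof. exact: (hip_blockscale xV_real yV_real zV_real). Qed.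

Lemma gxyzC A B : (g A B)^* = g B A.
Proof. by rewrite !gxyzE hipC hip_sigma. Qed.

Lemma gxyz_suml I r (P : pred I) (a : I -> C) (F : I -> M) Z :
  g (\sum_(i <- r | P i) a i *: F i) Z = \sum_(i <- r | P i) a i * g (F i) Z.
Proof.
rewrite gxyzE linear_sum hip_suml; apply: eq_bigr => i _.
by rewrite linearZ hipZl.
Qed.

Lemma gxyz_lie A B X : g (lie A B) X = g B (tau (lie (adjmx A) (sig X))).
Proof. by rewrite !gxyzE hip_sigma hip_liel hip_sigma sigma_tau. Qed.

Lemma gxyz_tau_lie_adjmx E W :
  g (tau (lie (adjmx E) W)) (tau (lie (adjmx E) W)) =
  g (tau (lie W (tau (lie (adjmx W) E)))) E.
Proof.
rewrite !gxyzE !sigma_tau hip_lier hip_adjmx adjmx_lie adjmxK.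
by rewrite (adjmx_blockscale x_real y_real z_real) adjmx_lie adjmxK.
Qed.

Lemma gxyz_blockscale a b c A B : a^* = a -> b^* = b -> c^* = c ->
  g (blockscale a b c A) B = g A (blockscale a b c B).
Proof.
move=> a_real b_real c_real.
rewrite !gxyzE [RHS]hip_sigma !blockscale_comp // hip_blockscale //.
all: by rewrite rmorphM /= ?xV_real ?yV_real ?zV_real ?a_real ?b_real ?c_real.
Qed.

Lemma gxyz_Pclaim X : g (Pclaim x y z X) X =
  \tr (blockscale (n%:R * x ^+ 2 + z ^+ 2) (n.+1%:R * z ^+ 2)
    (n.+1%:R / n%:R * ((n%:R - 1) * x + y) * z) (sig X) *m adjmx (sig X)).
Proof.
rewrite gxyzE hip_sigma -{1}(tau_sigma X) PclaimE blockscale_comp //.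
have x_neq0 := lt0r_neq0 x_gt0; have y_neq0 := lt0r_neq0 y_gt0.
have -> : (n%:R * x + z ^+ 2 / x) * x = n%:R * x ^+ 2 + z ^+ 2 by field.
have -> : n.+1%:R * (z ^+ 2 / y) * y = n.+1%:R * z ^+ 2 by field.
by rewrite -subn1 natrB.
Qed.

Variables (d : nat) (e : 'I_d -> M).
Hypothesis e_unitary : unitary_basis g e.

Lemma unitary_basis_expand Y : \tr Y = 0 -> Y = \sum_i g Y (e i) *: e i.
Proof.
case: e_unitary => _ [e_on e_span] trY; have [a Ya] := e_span Y trY.
have coord k : g Y (e k) = a k.
  rewrite Ya gxyz_suml (bigD1 k) //= e_on eqxx mulr1 big1 ?addr0 //.
  by move=> i /negbTE ik; rewrite e_on ik mulr0.
by rewrite {1}Ya; apply: eq_bigr => k _; rewrite coord.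
Qed.

Lemma unitary_basis_parseval Y : \tr Y = 0 ->
  \sum_i `|g (e i) Y| ^+ 2 = g Y Y.
Proof.
move=> trY; rewrite {2}(unitary_basis_expand trY) gxyz_suml.
by apply: eq_bigr => i _; rewrite normCK gxyzC mulrC.
Qed.

Lemma unitary_basis_lintrace (T : {linear M -> M}) : T 1%:M = 0 ->
  \sum_i g (T (e i)) (e i) = lintrace T.
Proof.
case: e_unitary => e_sl _ T1.
(* The traceless part of delta_mx a b has g-coordinates ((sig e_i) a b)^*,
   and its multiple of the identity is killed by T. *)
have T_delta a b : T (delta_mx a b) = \sum_i ((sig (e i)) a b)^* *: T (e i).
  pose c : C := (a == b)%:R / n.+1%:R; pose Y := delta_mx a b - c *: 1%:M.
  have trY : \tr Y = 0.
    by rewrite linearB /= mxtraceZ mxtrace1 mxtrace_delta mulfVK ?pnatr_eq0 ?subrr.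
  have -> : delta_mx a b = Y + c *: 1%:M by rewrite subrK.
  rewrite linearD (linearZZ T) T1 scaler0 addr0.
  rewrite (unitary_basis_expand trY) linear_sum; apply: eq_bigr => i _.
  rewrite linearZ /= gxyzE hip_sigma hipBl hipZl hip1l mxtrace_blockscale e_sl.
  by rewrite mulr0 conjC0 mulr0 subr0 hip_delta.
transitivity (\sum_i \sum_a \sum_b ((sig (e i)) a b)^* * T (e i) a b).
  apply: eq_bigr => i _; rewrite gxyzE hip_sigma hipE.
  by apply: eq_bigr => a _; apply: eq_bigr => b _; rewrite mulrC.
rewrite exchange_big; apply: eq_bigr => a _; rewrite exchange_big.
apply: eq_bigr => b _; rewrite T_delta summxE.
by apply: eq_bigr => i _; move: (_^*) => k; rewrite mxE.
Qed.

Lemma torsion_formE X : \tr X = 0 ->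
  torsion_form g e X *+ 2 =
  lintrace (tau \o lie (sig X) \o tau \o lie (adjmx (sig X))).
Proof.
move=> trX; rewrite /torsion_form -sum_pairs_ltn; first last.
- by move=> i; rewrite /lie subrr gxyzE linear0 hip0l normr0 expr0n.
- by move=> i j; rewrite lie_anti gxyzE linearN hipNl normrN.
rewrite -unitary_basis_lintrace /=; last first.
  by rewrite /lie mulmx1 mul1mx subrr linear0 mulmx0 mul0mx subrr linear0.
apply: eq_bigr => i _; rewrite -gxyz_tau_lie_adjmx -unitary_basis_parseval.
  by apply: eq_bigr => j _; rewrite gxyz_lie.
by rewrite mxtrace_blockscale mxtrace_lie mulr0.
Qed.

Lemma gxyz_Pclaim_torsion_form X : \tr X = 0 ->
  g (Pclaim x y z X) X = torsion_form g e X.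
Proof.
move=> trX; have trW : \tr (sig X) = 0 by rewrite mxtrace_blockscale trX mulr0.
have trW' : \tr (adjmx (sig X)) = 0 by rewrite mxtrace_adjmx trW conjC0.
apply/eqP; rewrite -(eqr_pMn2r (isT : (0 < 2)%N)) torsion_formE //.
by rewrite (lintrace_tau_lie2 x y z trW trW') // gxyz_Pclaim.
Qed.

End TwistedMetric.

Theorem lemma3p1 (C : numClosedFieldType) (n : nat) (hn : (2 <= n)%N)
    (x y z : C) (hx : 0 < x) (hy : 0 < y) (hz : 0 < z) :
  is_twisted_chern_ricci (@gxyz C n x y z) (@Pclaim C n x y z).
Proof.
have n_gt0 : (0 < n)%N by apply: leq_trans hn.
have x_ge0 := ltW hx; have y_ge0 := ltW hy; have z_ge0 := ltW hz.
split; [|split; [|split; [|split]]].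
- by move=> X trX; rewrite /in_sl PclaimE mxtrace_blockscale trX mulr0.
- by move=> X Y _ _; rewrite !PclaimE linearD.
- by move=> k X _; rewrite !PclaimE linearZ.
- move=> X Y _ _; rewrite !PclaimE gxyz_blockscale //;
  by apply/conj_Creal/ger0_real;
    rewrite ?(addr_ge0, mulr_ge0, divr_ge0, exprn_ge0, invr_ge0, ler0n).
- by move=> d e e_unitary X trX; apply: gxyz_Pclaim_torsion_form.
Qed.
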